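(* For $\alpha,\beta>0$ with $\alpha\beta=\pi^2$, \[ \sum_{n=1}^{\infty}\frac{e^{n\alpha}}{n\left(e^{2n\alpha}-1\right)}-\sum_{n=1}^{\infty}\frac{(-1)^n}{n\left(e^{2n\beta}-1\right)}=-\frac{1}{2}\log 2+\frac{\alpha+2\beta}{24}. \] *)

From Stdlib Require Import Reals.
From Coquelicot Require Import Coquelicot.
Open Scope R_scope.

Definition term1 (a : R) (n : nat) : R :=
  exp (INR n * a) / (INR n * (exp (2 * INR n * a) - 1)).

Definition term2 (b : R) (n : nat) : R :=
  (-1) ^ n / (INR n * (exp (2 * INR n * b) - 1)).

From Stdlib Require Import Reals Lra Lia Psatz.
From Coquelicot Require Import Coquelicot.
Open Scope R_scope.

(* Write [L a = sum_(n >= 1) 1 / (n (e^(n a) - 1))]. Since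
   [e^(n a) / (e^(2 n a) - 1) = 1 / (e^(n a) - 1) - 1 / (e^(2 n a) - 1)], the first series is
   [L a - L (2 a)], and regrouping signs the second is [L (4 b) - L (2 b)]. Everything then
   follows from the transformation formula
   [L (2 pi x) - L (2 pi / x) = ln x / 2 + pi / (12 x) - pi x / 12]
   at [x = a / (2 pi)] and [x = a / pi].

   The formula rests on the partial fraction expansion
   [pi coth (pi y) = 1 / y + sum_(k >= 1) 2 y / (y^2 + k^2)], proved here from scratch:
   squaring the series and summing [1 / (k^2 - j^2)] by partial fractions shows that the
   right-hand side [f] solves [f' = 6 zeta(2) - f^2], which forces [f y = c coth (c y)] with
   [c^2 = 6 zeta(2)], and letting [y -> +oo] gives [c = pi] (hence also
   [zeta(2) = pi^2 / 6]). Expanding every term of [L (2 pi x)] and [L (2 pi / x)] with it and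
   truncating at [N] and [M] with [x = M / N], the double sums cancel; what is left are
   harmonic numbers, which produce [ln x], and two Riemann sums of [atan t / t], whose
   difference vanishes as [N, M -> +oo]. This proves the formula for rational [x], and
   monotonicity of [L] extends it to all [x > 0]. *)

(* [psum] rather than Coquelicot's [sum_n], so that partial sums unfold by [simpl]. *)
Fixpoint psum (f : nat -> R) (n : nat) : R :=
  match n with O => 0 | S m => psum f m + f m end.

Lemma psum_S f n : psum f (S n) = psum f n + f n.
Proof. reflexivity. Qed.

Lemma psum_ext f g n : (forall k, (k < n)%nat -> f k = g k) -> psum f n = psum g n.
Proof.
  induction n as [|n IH]; intros H; simpl; auto.
  rewrite IH, H; auto with arith.
Qed.

Lemma psum_plus f g n : psum (fun k => f k + g k) n = psum f n + psum g n.
Proof. induction n; simpl; lra. Qed.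

Lemma psum_minus f g n : psum (fun k => f k - g k) n = psum f n - psum g n.
Proof. induction n; simpl; lra. Qed.

Lemma psum_scal c f n : psum (fun k => c * f k) n = c * psum f n.
Proof. induction n; simpl; [lra | rewrite IHn; ring]. Qed.

Lemma psum_const c n : psum (fun _ => c) n = INR n * c.
Proof. induction n; simpl psum; [simpl; ring | rewrite IHn, S_INR; ring]. Qed.

Lemma psum_le f g n : (forall k, (k < n)%nat -> f k <= g k) -> psum f n <= psum g n.
Proof.
  induction n as [|n IH]; intros H; simpl; [lra|].
  apply Rplus_le_compat; auto with arith.
Qed.

Lemma psum_nonneg f n : (forall k, (k < n)%nat -> 0 <= f k) -> 0 <= psum f n.
Proof.
  intros H; rewrite <- (Rmult_0_r (INR n)), <- psum_const.
  now apply psum_le.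
Qed.

Lemma psum_add f m n : psum f (m + n) = psum f m + psum (fun k => f (m + k)%nat) n.
Proof.
  induction n as [|n IH]; simpl.
  - rewrite Nat.add_0_r; ring.
  - rewrite Nat.add_succ_r; simpl; rewrite IH; ring.
Qed.

Lemma psum_first f n : psum f (S n) = f O + psum (fun k => f (S k)) n.
Proof. rewrite <- Nat.add_1_l, psum_add; simpl; ring. Qed.

Lemma psum_mono f m n : (forall k, 0 <= f k) -> (m <= n)%nat -> psum f m <= psum f n.
Proof.
  intros Hf Hmn; replace n with (m + (n - m))%nat by lia.
  rewrite psum_add.
  assert (0 <= psum (fun k => f (m + k)%nat) (n - m)) by (apply psum_nonneg; auto).
  lra.
Qed.

Lemma psum_swap (F : nat -> nat -> R) m n :
  psum (fun i => psum (F i) n) m = psum (fun j => psum (fun i => F i j) m) n.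
Proof.
  induction m as [|m IH]; simpl.
  - induction n; simpl; lra.
  - rewrite IH, <- psum_plus; reflexivity.
Qed.

Lemma psum_block f m l :
  psum f (m * l) = psum (fun i => psum (fun r => f (i * l + r)%nat) l) m.
Proof.
  induction m as [|m IH]; simpl; auto.
  rewrite Nat.add_comm, psum_add, IH; reflexivity.
Qed.

Lemma psum_rev f n : psum f n = psum (fun k => f (n - 1 - k)%nat) n.
Proof.
  induction n as [|n IH]; auto.
  rewrite (psum_first (fun k => f (S n - 1 - k)%nat)); simpl.
  rewrite IH, Nat.sub_0_r, Nat.sub_0_r, Rplus_comm; f_equal.
  apply psum_ext; intros k Hk; f_equal; lia.
Qed.

Lemma psum_telescope g n : psum (fun k => g (S k) - g k) n = g n - g O.
Proof. induction n; simpl; lra. Qed.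

Lemma psum_delta j n c :
  (j < n)%nat -> psum (fun k => if Nat.eq_dec j k then c else 0) n = c.
Proof.
  induction n as [|n IH]; intros H; [lia|]; simpl.
  destruct (Nat.eq_dec j n) as [->|Hjn].
  - rewrite (psum_ext _ (fun _ => 0)), psum_const; [ring|].
    intros k Hk; destruct (Nat.eq_dec n k); [lia | reflexivity].
  - rewrite IH by lia; ring.
Qed.

Lemma psum_sum_n f n : psum f (S n) = sum_n f n.
Proof.
  induction n as [|n IH].
  - simpl; rewrite sum_O; ring.
  - rewrite sum_Sn, <- IH; reflexivity.
Qed.

Lemma psum_derivable (F F' : R -> nat -> R) y n :
  (forall k, derivable_pt_lim (fun z => F z k) y (F' y k)) ->
  derivable_pt_lim (fun z => psum (F z) n) y (psum (F' y) n).
Proof.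
  intros H; induction n as [|n IH]; simpl.
  - apply derivable_pt_lim_const.
  - now apply (derivable_pt_lim_plus (fun z => psum (F z) n) (fun z => F z n)).
Qed.

Definition sums (f : nat -> R) (l : R) := is_lim_seq (psum f) l.

Lemma sums_is_series f l : sums f l <-> is_series f l.
Proof.
  unfold sums; split; intros H.
  - apply is_lim_seq_incr_1 in H.
    eapply is_lim_seq_ext in H; [exact H|]; intros n; now rewrite psum_sum_n.
  - apply is_lim_seq_incr_1.
    eapply is_lim_seq_ext; [|exact H]; intros n; now rewrite psum_sum_n.
Qed.

Lemma sums_unique f l1 l2 : sums f l1 -> sums f l2 -> l1 = l2.
Proof.
  intros H1 H2; apply is_lim_seq_unique in H1, H2.
  rewrite H1 in H2; now injection H2.
Qed.

Lemma sums_ext f g l : (forall k, f k = g k) -> sums f l -> sums g l.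
Proof. intros H; apply is_lim_seq_ext; intros n; apply psum_ext; auto. Qed.

Lemma sums_plus f g a b : sums f a -> sums g b -> sums (fun k => f k + g k) (a + b).
Proof.
  intros Hf Hg; eapply is_lim_seq_ext; [intros n; symmetry; apply psum_plus|].
  now apply is_lim_seq_plus'.
Qed.

Lemma sums_minus f g a b : sums f a -> sums g b -> sums (fun k => f k - g k) (a - b).
Proof.
  intros Hf Hg; eapply is_lim_seq_ext; [intros n; symmetry; apply psum_minus|].
  now apply is_lim_seq_minus'.
Qed.

Lemma sums_scal c f a : sums f a -> sums (fun k => c * f k) (c * a).
Proof.
  intros Hf; eapply is_lim_seq_ext; [intros n; symmetry; apply psum_scal|].
  exact (is_lim_seq_scal_l _ c a Hf).
Qed.

Lemma sums_le f g a b : (forall k, f k <= g k) -> sums f a -> sums g b -> a <= b.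
Proof.
  intros H Hf Hg; change (Rbar_le a b).
  apply (is_lim_seq_le (psum f) (psum g) a b); auto.
  intros n; apply psum_le; auto.
Qed.

Lemma psum_le_sums f l n : (forall k, 0 <= f k) -> sums f l -> psum f n <= l.
Proof.
  intros Hf Hl; change (Rbar_le (psum f n) l).
  apply (is_lim_seq_le_loc (fun _ => psum f n) (psum f)); [|apply is_lim_seq_const | exact Hl].
  exists n; intros m Hm; apply psum_mono; auto.
Qed.

Lemma sums_le_bound f l M : sums f l -> (forall n, psum f n <= M) -> l <= M.
Proof.
  intros Hl HM; change (Rbar_le l M).
  apply (is_lim_seq_le (psum f) (fun _ => M)); auto using is_lim_seq_const.
Qed.

Lemma sums_of_bounded_nonneg f M :
  (forall k, 0 <= f k) -> (forall n, psum f n <= M) -> exists l, sums f l.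
Proof.
  intros Hf HM.
  destruct (ex_finite_lim_seq_incr (psum f) M) as [l Hl]; eauto.
  intros n; simpl; specialize (Hf n); lra.
Qed.

Lemma sums_shift f l m : sums f l -> sums (fun k => f (m + k)%nat) (l - psum f m).
Proof.
  intros H.
  assert (Hm : is_lim_seq (fun n => psum f (m + n)) l).
  { apply (is_lim_seq_subseq (psum f) l (fun n => (m + n)%nat)); auto.
    intros P [K HK]; exists K; intros n Hn; apply HK; lia. }
  eapply is_lim_seq_ext; [|exact (is_lim_seq_minus' _ _ _ _ Hm (is_lim_seq_const (psum f m)))].
  intros n; simpl; rewrite psum_add; ring.
Qed.

Lemma sums_dominated u v lv : (forall k, Rabs (u k) <= v k) -> sums v lv -> exists lu, sums u lu.
Proof.
  intros H Hv.
  destruct (ex_series_le u v H) as [l Hl].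
  - exists lv; now apply sums_is_series.
  - exists l; now apply sums_is_series.
Qed.

Lemma sums_abs_le u v lu lv :
  (forall k, Rabs (u k) <= v k) -> sums u lu -> sums v lv -> Rabs lu <= lv.
Proof.
  intros H Hu Hv; apply Rabs_le; split.
  - apply (sums_le (fun k => -1 * v k) u); auto.
    + intros k; specialize (H k); apply Rabs_le_between in H; lra.
    + replace (- lv) with (-1 * lv) by ring; now apply sums_scal.
  - apply (sums_le u v); auto.
    intros k; specialize (H k); apply Rabs_le_between in H; lra.
Qed.

Lemma sums_tail_le u v lu lv n :
  (forall k, Rabs (u k) <= v k) -> sums u lu -> sums v lv ->
  Rabs (lu - psum u n) <= lv - psum v n.
Proof.
  intros H Hu Hv.
  apply (sums_abs_le (fun k => u (n + k)%nat) (fun k => v (n + k)%nat)); auto using sums_shift.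
Qed.

Lemma sums_tail_lim v lv : sums v lv -> is_lim_seq (fun n => lv - psum v n) 0.
Proof.
  intros H; replace 0 with (lv - lv) by ring.
  apply is_lim_seq_minus'; auto using is_lim_seq_const.
Qed.

Lemma INR_unbounded x : exists n, x < INR n.
Proof.
  destruct (Rle_lt_dec x 0) as [Hx|Hx].
  - exists 1%nat; simpl; lra.
  - destruct (nfloor_ex x) as [n Hn]; [lra|].
    exists (S n); rewrite S_INR; lra.
Qed.

Lemma le_of_le_sub_div L T c : 0 <= c -> (forall K, L - c / (INR K + 1) <= T) -> L <= T.
Proof.
  intros Hc H; destruct (Rle_lt_dec L T) as [|HTL]; auto; exfalso.
  destruct (INR_unbounded (c / (L - T))) as [K HK].
  specialize (H K); pose proof (pos_INR K).
  assert (c / (INR K + 1) < L - T); [|lra].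
  apply Rmult_lt_reg_r with (INR K + 1); [lra|].
  unfold Rdiv; rewrite Rmult_assoc, Rinv_l by lra.
  assert (c / (L - T) * (L - T) = c) by (field; lra).
  nra.
Qed.

Lemma is_lim_seq_div_INRp1 c : is_lim_seq (fun n => c / (INR n + 1)) 0.
Proof.
  replace (Finite 0) with (Rbar_mult c 0) by (simpl; f_equal; ring).
  apply (is_lim_seq_scal_l (fun n => / (INR n + 1))).
  apply (is_lim_seq_inv _ p_infty); [|discriminate].
  eapply is_lim_seq_ext; [intros n; apply S_INR|].
  apply (is_lim_seq_incr_1 INR), is_lim_seq_INR.
Qed.

Lemma exp_gt_1 u : 0 < u -> 1 < exp u.
Proof. intros H; pose proof (exp_ineq1 u); lra. Qed.

Lemma ln_1p_le u : 0 < 1 + u -> ln (1 + u) <= u.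
Proof. intros H; rewrite <- (ln_exp u) at 2; apply ln_le; auto using exp_ineq1_le. Qed.

Lemma inv_sub_inv_S_bounds m : (1 <= m)%nat -> 0 <= / INR m - / (INR m + 1) <= / INR m ^ 2.
Proof.
  intros Hm; apply le_INR in Hm; simpl in Hm.
  replace (/ INR m - / (INR m + 1)) with (/ (INR m * (INR m + 1))) by (field; lra).
  split; [apply Rlt_le, Rinv_0_lt_compat; nra | apply Rinv_le_contravar; nra].
Qed.

Lemma atan_sub_bounds u v : 0 <= v -> v <= u ->
  (u - v) / (1 + u^2) <= atan u - atan v <= (u - v) / (1 + v^2).
Proof.
  intros Hv Huv; destruct (Req_dec u v) as [->|Hne].
  - unfold Rdiv; rewrite Rminus_diag, !Rmult_0_l; lra.
  - destruct (MVT_cor2 atan (fun x => / (1 + x^2)) v u) as [c [Hc Hcvu]]; [lra| |].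
    { intros; apply derivable_pt_lim_atan. }
    replace (atan u - atan v) with ((u - v) / (1 + c^2)) by (rewrite Hc; field; nra).
    split; apply Rmult_le_compat_l; try lra; apply Rinv_le_contravar; nra.
Qed.

Lemma atan_le_id u : 0 <= u -> atan u <= u.
Proof.
  intros H; destruct (atan_sub_bounds u 0) as [_ Hle]; auto with real.
  rewrite atan_0 in Hle; replace ((u - 0) / (1 + 0^2)) with u in Hle by field; lra.
Qed.

Lemma atan_ge_div u : 0 <= u -> u / (1 + u^2) <= atan u.
Proof.
  intros H; destruct (atan_sub_bounds u 0) as [Hge _]; auto with real.
  rewrite atan_0, !Rminus_0_r in Hge; exact Hge.
Qed.

Lemma atan_nonneg u : 0 <= u -> 0 <= atan u.
Proof.
  intros H; pose proof (atan_ge_div u H).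
  assert (0 <= u / (1 + u^2)) by (apply Rdiv_le_0_compat; nra); lra.
Qed.

Lemma atan_sub_le u v : 0 <= v -> v <= u -> atan u - atan v <= u - v.
Proof.
  intros Hv Huv; destruct (atan_sub_bounds u v Hv Huv) as [_ H].
  eapply Rle_trans; [exact H|].
  unfold Rdiv; rewrite <- (Rmult_1_r (u - v)) at 2.
  apply Rmult_le_compat_l; [lra|]; rewrite <- Rinv_1; apply Rinv_le_contravar; nra.
Qed.

Definition inv_sq_shift (y : R) (k : nat) := / (y^2 + (INR k + 1)^2).

Lemma sq_add_sqS_pos y k : 0 < y^2 + (INR k + 1)^2.
Proof. pose proof (INRp1_pos k); nra. Qed.

Lemma inv_sq_shift_le y k : 0 < inv_sq_shift y k <= / (INR k + 1)^2.
Proof.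
  unfold inv_sq_shift; pose proof (sq_add_sqS_pos y k); pose proof (INRp1_pos k).
  split; [apply Rinv_0_lt_compat; lra | apply Rinv_le_contravar; nra].
Qed.

(* [atan (t / a) / a] is a primitive of [1 / (a^2 + t^2)]. *)
Lemma inv_sq_atan_bounds a s : 0 < a -> 0 <= s ->
  / (a^2 + (s + 1)^2) <= (atan ((s + 1) / a) - atan (s / a)) / a <= / (a^2 + s^2).
Proof.
  intros Ha Hs.
  assert (0 <= s / a) by (apply Rdiv_le_0_compat; lra).
  assert (s / a <= (s + 1) / a) by (apply Rmult_le_compat_r; [apply Rlt_le, Rinv_0_lt_compat|]; lra).
  destruct (atan_sub_bounds ((s + 1) / a) (s / a)) as [H1 H2]; auto.
  replace ((s + 1) / a - s / a) with (/ a) in * by (field; lra).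
  replace (/ (a^2 + (s + 1)^2)) with (/ a / (1 + ((s + 1) / a)^2) / a) by (field; nra).
  replace (/ (a^2 + s^2)) with (/ a / (1 + (s / a)^2) / a) by (field; split; nra).
  split; apply Rmult_le_compat_r; auto; apply Rlt_le, Rinv_0_lt_compat; lra.
Qed.

Lemma psum_inv_sq_shift_bounds a m K : 0 < a ->
  (atan ((INR (m + K) + 1) / a) - atan ((INR m + 1) / a)) / a
  <= psum (fun k => inv_sq_shift a (m + k)) K
  <= (atan (INR (m + K) / a) - atan (INR m / a)) / a.
Proof.
  intros Ha.
  assert (HS : forall k, INR (m + S k) = INR (m + k) + 1)
    by (intros k; rewrite <- S_INR; f_equal; lia).
  split.
  - set (g := fun k => atan ((INR (m + k) + 1) / a) / a).
    replace (_ / a) with (g K - g O) by (unfold g; rewrite Nat.add_0_r; field; lra).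
    rewrite <- psum_telescope; apply psum_le; intros k _; unfold g, inv_sq_shift.
    rewrite HS.
    destruct (inv_sq_atan_bounds a (INR (m + k) + 1) Ha) as [_ H]; [pose proof (pos_INR (m + k)); lra|].
    unfold Rminus, Rdiv in *; rewrite Ropp_mult_distr_l, <- Rmult_plus_distr_r; exact H.
  - set (g := fun k => atan (INR (m + k) / a) / a).
    replace (_ / a) with (g K - g O) by (unfold g; rewrite Nat.add_0_r; field; lra).
    rewrite <- psum_telescope; apply psum_le; intros k _; unfold g, inv_sq_shift.
    rewrite HS.
    destruct (inv_sq_atan_bounds a (INR (m + k)) Ha (pos_INR _)) as [H _].
    unfold Rminus, Rdiv in *; rewrite Ropp_mult_distr_l, <- Rmult_plus_distr_r; exact H.
Qed.

Lemma psum_inv_sq_le n : psum (fun k => / (INR k + 1)^2) (S n) <= 2 - / (INR n + 1).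
Proof.
  induction n as [|n IH]; [simpl; lra|].
  change (psum (fun k => / (INR k + 1)^2) (S n) + / (INR (S n) + 1)^2 <= 2 - / (INR (S n) + 1)).
  rewrite S_INR; pose proof (pos_INR n).
  assert (/ (INR n + 1 + 1)^2 <= / (INR n + 1) - / (INR n + 1 + 1)); [|lra].
  replace (/ (INR n + 1) - / (INR n + 1 + 1)) with (/ ((INR n + 1) * (INR n + 1 + 1))) by (field; lra).
  apply Rinv_le_contravar; nra.
Qed.

Definition zeta2 := Series (fun k => / (INR k + 1)^2).

Lemma sums_zeta2 : sums (fun k => / (INR k + 1)^2) zeta2.
Proof.
  destruct (sums_of_bounded_nonneg (fun k => / (INR k + 1)^2) 2) as [l Hl].
  - intros k; pose proof (INRp1_pos k); apply Rlt_le, Rinv_0_lt_compat; nra.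
  - intros [|n]; [simpl; lra|].
    pose proof (psum_inv_sq_le n); pose proof (Rinv_0_lt_compat _ (INRp1_pos n)); lra.
  - unfold zeta2; rewrite (is_series_unique _ l); [|apply sums_is_series]; auto.
Qed.

Lemma sums_scal_zeta2 c : sums (fun k => c * / (INR k + 1)^2) (c * zeta2).
Proof. apply sums_scal, sums_zeta2. Qed.

Lemma zeta2_pos : 0 < zeta2.
Proof.
  apply Rlt_le_trans with (psum (fun k => / (INR k + 1)^2) 1); [simpl; lra|].
  apply psum_le_sums; [|apply sums_zeta2].
  intros k; pose proof (INRp1_pos k); apply Rlt_le, Rinv_0_lt_compat; nra.
Qed.

Lemma inv_sq_shift_tail_bounds a m T : 0 < a ->
  sums (fun k => inv_sq_shift a (m + k)) T ->
  (PI/2 - atan ((INR m + 1) / a)) / a <= T <= (PI/2 - atan (INR m / a)) / a.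
Proof.
  intros Ha HT; split.
  - apply (le_of_le_sub_div _ _ 1); [lra|]; intros K.
    eapply Rle_trans; [|apply (psum_le_sums (fun k => inv_sq_shift a (m + k)) _ K)];
      [|intros k; apply Rlt_le, inv_sq_shift_le | exact HT].
    eapply Rle_trans; [|apply (psum_inv_sq_shift_bounds a m K Ha)].
    set (z := (INR (m + K) + 1) / a).
    assert (Hz : 0 < z) by (apply Rdiv_lt_0_compat; [apply INRp1_pos | lra]).
    assert (Hinv : / z <= a / (INR K + 1)).
    { unfold z; rewrite Rinv_div; apply Rmult_le_compat_l; [lra|].
      apply Rinv_le_contravar; [apply INRp1_pos|].
      rewrite plus_INR; pose proof (pos_INR m); lra. }
    pose proof (atan_inv z Hz); pose proof (atan_le_id (/ z) (Rlt_le _ _ (Rinv_0_lt_compat _ Hz))).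
    pose proof (INRp1_pos K).
    replace ((PI / 2 - atan ((INR m + 1) / a)) / a - 1 / (INR K + 1))
      with ((PI / 2 - a / (INR K + 1) - atan ((INR m + 1) / a)) / a) by (field; lra).
    apply Rmult_le_compat_r; [apply Rlt_le, Rinv_0_lt_compat; lra | lra].
  - apply (sums_le_bound _ _ _ HT); intros K.
    eapply Rle_trans; [apply (psum_inv_sq_shift_bounds a m K Ha)|].
    apply Rmult_le_compat_r; [apply Rlt_le, Rinv_0_lt_compat; lra|].
    pose proof (atan_bound (INR (m + K) / a)); lra.
Qed.

Lemma sums_Series_of_dominated f c :
  (forall k, Rabs (f k) <= c * / (INR k + 1)^2) -> sums f (Series f).
Proof.
  intros Hf; destruct (sums_dominated _ _ _ Hf (sums_scal_zeta2 c)) as [l Hl].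
  rewrite (is_series_unique _ l); [|apply sums_is_series]; auto.
Qed.

(** * The partial fraction series of the hyperbolic cotangent *)

Definition coth_term (y : R) (k : nat) := 2 * y / (y^2 + (INR k + 1)^2).
Definition coth_term_deriv (y : R) (k : nat) :=
  2 * ((INR k + 1)^2 - y^2) / (y^2 + (INR k + 1)^2)^2.
Definition coth_sum (y : R) := Series (coth_term y).
Definition coth_sum_deriv (y : R) := Series (coth_term_deriv y).

Lemma coth_term_inv_sq_shift y k : coth_term y k = 2 * y * inv_sq_shift y k.
Proof. reflexivity. Qed.

Lemma coth_term_bound y k : Rabs (coth_term y k) <= 2 * Rabs y * / (INR k + 1)^2.
Proof.
  rewrite coth_term_inv_sq_shift, !Rabs_mult, Rabs_right, (Rabs_right (inv_sq_shift y k)) by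
    (destruct (inv_sq_shift_le y k); lra).
  destruct (inv_sq_shift_le y k); apply Rmult_le_compat_l; auto.
  pose proof (Rabs_pos y); lra.
Qed.

Lemma coth_term_deriv_bound y k : Rabs (coth_term_deriv y k) <= 2 * / (INR k + 1)^2.
Proof.
  unfold coth_term_deriv; pose proof (sq_add_sqS_pos y k); pose proof (INRp1_pos k).
  assert (Rabs ((INR k + 1)^2 - y^2) <= y^2 + (INR k + 1)^2) by (apply Rabs_le; nra).
  rewrite Rabs_div, Rabs_mult, (Rabs_right 2), (Rabs_right (_^2)) by nra.
  apply Rle_trans with (2 * / (y^2 + (INR k + 1)^2)).
  - replace (2 * / (y^2 + (INR k + 1)^2))
      with (2 * (y^2 + (INR k + 1)^2) / (y^2 + (INR k + 1)^2)^2) by (field; lra).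
    apply Rmult_le_compat_r; [apply Rlt_le, Rinv_0_lt_compat; nra | lra].
  - apply Rmult_le_compat_l; [lra | apply Rinv_le_contravar; nra].
Qed.

Lemma sums_coth_sum y : sums (coth_term y) (coth_sum y).
Proof. exact (sums_Series_of_dominated _ _ (coth_term_bound y)). Qed.

Lemma sums_coth_sum_deriv y : sums (coth_term_deriv y) (coth_sum_deriv y).
Proof. exact (sums_Series_of_dominated _ _ (coth_term_deriv_bound y)). Qed.

Lemma sums_inv_sq_shift a : 0 < a -> sums (inv_sq_shift a) (coth_sum a / (2 * a)).
Proof.
  intros Ha; replace (coth_sum a / (2 * a)) with (/ (2 * a) * coth_sum a) by (field; lra).
  eapply sums_ext; [|apply sums_scal, sums_coth_sum].
  intros k; cbv beta; rewrite coth_term_inv_sq_shift; field; lra.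
Qed.

Lemma coth_sum_nonneg y : 0 <= y -> 0 <= coth_sum y.
Proof.
  intros Hy; rewrite <- (Rmult_0_l zeta2).
  apply (sums_le (fun k => 0 * / (INR k + 1)^2) (coth_term y));
    auto using sums_scal_zeta2, sums_coth_sum.
  intros k; cbv beta; rewrite coth_term_inv_sq_shift; destruct (inv_sq_shift_le y k); nra.
Qed.

Lemma coth_sum_le y : 0 <= y -> coth_sum y <= 2 * y * zeta2.
Proof.
  intros Hy; apply (sums_le (coth_term y) (fun k => 2 * y * / (INR k + 1)^2));
    auto using sums_coth_sum, sums_scal_zeta2.
  intros k; pose proof (coth_term_bound y k) as H.
  rewrite (Rabs_right y) in H by lra; apply Rabs_le_between in H; lra.
Qed.

Lemma coth_sum_bounds y : 0 < y -> PI - 2 / y <= coth_sum y <= PI.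
Proof.
  intros Hy.
  destruct (inv_sq_shift_tail_bounds y 0 _ Hy (sums_inv_sq_shift y Hy)) as [H1 H2].
  simpl in H1, H2; rewrite Rplus_0_l in H1; unfold Rdiv in H2; rewrite Rmult_0_l, atan_0 in H2.
  pose proof (atan_le_id (/ y) (Rlt_le _ _ (Rinv_0_lt_compat _ Hy))).
  replace (coth_sum y) with (2 * y * (coth_sum y / (2 * y))) by (field; lra).
  split.
  - apply Rle_trans with (2 * y * ((PI / 2 - atan (1 / y)) / y)); [|apply Rmult_le_compat_l; lra].
    replace (1 / y) with (/ y) by (field; lra).
    replace (2 * y * ((PI / 2 - atan (/ y)) / y)) with (PI - 2 * atan (/ y)) by (field; lra).
    unfold Rdiv; lra.
  - apply Rle_trans with (2 * y * ((PI / 2 - 0) * / y)); [apply Rmult_le_compat_l; lra|].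
    right; field; lra.
Qed.

Lemma coth_term_derivable y k :
  derivable_pt_lim (fun z => coth_term z k) y (coth_term_deriv y k).
Proof.
  apply is_derive_Reals; unfold coth_term, coth_term_deriv; pose proof (sq_add_sqS_pos y k).
  auto_derive; [lra | field; lra].
Qed.

(* Termwise differentiation, justified by the uniform bound [coth_term_deriv_bound]. *)
Lemma coth_sum_derivable y : derivable_pt_lim coth_sum y (coth_sum_deriv y).
Proof.
  apply (CVU_derivable (fun n z => psum (coth_term z) n) (fun n z => psum (coth_term_deriv z) n)
           coth_sum coth_sum_deriv y (mkposreal 1 Rlt_0_1)).
  - intros eps Heps.
    pose proof (sums_tail_lim _ _ (sums_scal_zeta2 2)) as Ht.
    apply is_lim_seq_spec in Ht; destruct (Ht (mkposreal eps Heps)) as [N HN].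
    exists N; intros n z Hn _.
    eapply Rle_lt_trans;
      [apply (sums_tail_le _ _ _ _ n (coth_term_deriv_bound z) (sums_coth_sum_deriv z)
                (sums_scal_zeta2 2))|].
    specialize (HN n Hn); change (pos (mkposreal eps Heps)) with eps in HN.
    apply Rabs_lt_between in HN; lra.
  - intros x _; apply is_lim_seq_Reals, sums_coth_sum.
  - intros n x _; apply psum_derivable; intros; apply coth_term_derivable.
  - unfold Boule; rewrite Rminus_diag, Rabs_R0; simpl; lra.
Qed.

(** * Squaring the series: a Riccati equation *)

Definition harmonic n := psum (fun i => / (INR i + 1)) n.

Definition inv_sq_diff j k :=
  if Nat.eq_dec j k then 0 else / ((INR k + 1)^2 - (INR j + 1)^2).

Definition inv_sq_diff_psum j N := psum (inv_sq_diff j) N.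

Lemma INRp1_sq_neq j k : j <> k -> (INR k + 1)^2 - (INR j + 1)^2 <> 0.
Proof.
  intros Hjk Heq; apply Hjk, INR_eq.
  pose proof (pos_INR j); pose proof (pos_INR k); nra.
Qed.

Lemma inv_sq_diff_anti j k : inv_sq_diff j k = - inv_sq_diff k j.
Proof.
  unfold inv_sq_diff; destruct (Nat.eq_dec j k), (Nat.eq_dec k j); try lia; [ring|].
  pose proof (INRp1_sq_neq j k n); field; split; auto; lra.
Qed.

(* Partial fractions [1/(k^2 - j^2) = (1/(k - j) - 1/(k + j)) / (2 j)] turn the sum into
   harmonic numbers. *)
Lemma inv_sq_diff_psum_diag j :
  inv_sq_diff_psum j (S j) = 3 / (4 * (INR j + 1)^2) - harmonic (2 * j + 2) / (2 * (INR j + 1)).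
Proof.
  unfold inv_sq_diff_psum; simpl psum; unfold inv_sq_diff at 2.
  destruct (Nat.eq_dec j j) as [_|]; [rewrite Rplus_0_r | lia].
  set (J := INR j + 1); assert (HJ : 0 < J) by apply INRp1_pos.
  rewrite (psum_ext _ (fun k => / (2 * J) * (- / INR (j - k) - / (INR (k + j + 1) + 1)))).
  2:{ intros k Hk; unfold inv_sq_diff; destruct (Nat.eq_dec j k); [lia|].
      rewrite minus_INR, !plus_INR by lia; simpl INR; fold J.
      assert (INR k < INR j) by (apply lt_INR; auto); pose proof (pos_INR k).
      unfold J; field; repeat split; nra. }
  rewrite psum_scal, psum_minus.
  assert (E1 : psum (fun k => - / INR (j - k)) j = - harmonic j).
  { unfold harmonic; rewrite (psum_rev (fun k => / (INR k + 1))).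
    transitivity (-1 * psum (fun k => / (INR (j - 1 - k) + 1)) j); [rewrite <- psum_scal | ring].
    apply psum_ext; intros k Hk; rewrite <- S_INR.
    replace (S (j - 1 - k)) with (j - k)%nat by lia; ring. }
  assert (E2 : psum (fun k => / (INR (k + j + 1) + 1)) j = harmonic (S j + j) - harmonic (S j)).
  { unfold harmonic; rewrite (psum_add _ (S j) j); ring_simplify.
    apply psum_ext; intros k _; do 3 f_equal; lia. }
  assert (E3 : harmonic (2 * j + 2) = harmonic (S j + j) + / (2 * J)).
  { unfold harmonic; replace (2 * j + 2)%nat with (S (S j + j)) by lia.
    change (psum (fun i => / (INR i + 1)) (S j + j) + / (INR (S j + j) + 1)
            = psum (fun i => / (INR i + 1)) (S j + j) + / (2 * J)).
    rewrite plus_INR, S_INR; unfold J; do 2 f_equal; ring. }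
  assert (E4 : harmonic (S j) = harmonic j + / J) by reflexivity.
  rewrite E1, E2, E3, E4; field; lra.
Qed.

Definition inv_sq_diff_err j N :=
  (harmonic (N + j + 1) - harmonic (N - j - 1)) / (2 * (INR j + 1)).

Lemma inv_sq_diff_psum_eq j N : (j < N)%nat ->
  inv_sq_diff_psum j N = 3 / (4 * (INR j + 1)^2) - inv_sq_diff_err j N.
Proof.
  intros H; unfold inv_sq_diff_err.
  replace N with (S j + (N - j - 1))%nat at 1 by lia.
  replace (N + j + 1)%nat with (2 * j + 2 + (N - j - 1))%nat by lia.
  generalize (N - j - 1)%nat; intros d; induction d as [|d IH].
  - rewrite !Nat.add_0_r, inv_sq_diff_psum_diag; unfold harmonic at 3; simpl psum.
    field; pose proof (INRp1_pos j); lra.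
  - unfold inv_sq_diff_psum in *; rewrite Nat.add_succ_r.
    change (psum (inv_sq_diff j) (S (S j + d)))
      with (psum (inv_sq_diff j) (S j + d) + inv_sq_diff j (S j + d)); rewrite IH.
    unfold inv_sq_diff; destruct (Nat.eq_dec j (S j + d)); [lia|].
    unfold harmonic; replace (2 * j + 2 + S d)%nat with (S (2 * j + 2 + d)) by lia; rewrite !psum_S.
    rewrite !plus_INR, !S_INR, mult_INR; simpl INR.
    pose proof (pos_INR j); pose proof (pos_INR d); field; repeat split; nra.
Qed.

Lemma inv_sq_diff_err_bounds j N : (j < N)%nat -> 0 <= inv_sq_diff_err j N <= / INR (N - j).
Proof.
  intros H; unfold inv_sq_diff_err, harmonic.
  replace (N + j + 1)%nat with ((N - j - 1) + (2 * j + 2))%nat by lia.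
  rewrite psum_add, Rplus_comm; unfold Rminus; rewrite Rplus_assoc, Rplus_opp_r, Rplus_0_r.
  assert (HJ : 0 < 2 * (INR j + 1)) by (pose proof (INRp1_pos j); lra).
  split.
  - apply Rdiv_le_0_compat; auto; apply psum_nonneg; intros k _.
    apply Rlt_le, Rinv_0_lt_compat, INRp1_pos.
  - apply Rle_trans with (psum (fun _ => / INR (N - j)) (2 * j + 2) / (2 * (INR j + 1))).
    + apply Rmult_le_compat_r; [apply Rlt_le, Rinv_0_lt_compat; auto|].
      apply psum_le; intros k _; apply Rinv_le_contravar; [apply lt_0_INR; lia|].
      rewrite <- S_INR; apply le_INR; lia.
    + rewrite psum_const, plus_INR, mult_INR; simpl INR.
      right; field; split; [apply not_0_INR; lia | lra].
Qed.

Lemma coth_term_mul y j k : coth_term y j * coth_term y k =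
  (if Nat.eq_dec j k then coth_term y j ^ 2 else 0)
  + 4 * y^2 * ((inv_sq_shift y j - inv_sq_shift y k) * inv_sq_diff j k).
Proof.
  unfold inv_sq_diff, coth_term, inv_sq_shift.
  pose proof (sq_add_sqS_pos y j); pose proof (sq_add_sqS_pos y k).
  destruct (Nat.eq_dec j k) as [->|Hjk]; [ring|].
  pose proof (INRp1_sq_neq j k Hjk); field; repeat split; lra.
Qed.

(* Expanding the square with [coth_term_mul]; the antisymmetry of [inv_sq_diff] folds the
   two cross sums into one. *)
Lemma psum_coth_term_sq y N : (psum (coth_term y) N)^2 =
  psum (fun j => coth_term y j ^ 2) N
  + 8 * y^2 * psum (fun j => inv_sq_shift y j * inv_sq_diff_psum j N) N.
Proof.
  set (b := inv_sq_shift y).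
  assert (E0 : (psum (coth_term y) N)^2
               = psum (fun j => psum (fun k => coth_term y j * coth_term y k) N) N).
  { rewrite (psum_ext (fun j => psum (fun k => coth_term y j * coth_term y k) N)
                       (fun j => psum (coth_term y) N * coth_term y j)), psum_scal; [ring|].
    intros j _; rewrite psum_scal; ring. }
  rewrite E0, (psum_ext _ (fun j => coth_term y j ^ 2
      + 4 * y^2 * (b j * inv_sq_diff_psum j N - psum (fun k => b k * inv_sq_diff j k) N))).
  2:{ intros j Hj.
      rewrite (psum_ext _ (fun k => (if Nat.eq_dec j k then coth_term y j ^ 2 else 0)
                 + 4 * y^2 * (b j * inv_sq_diff j k - b k * inv_sq_diff j k)))
        by (intros k _; rewrite coth_term_mul; unfold b; ring).
      rewrite psum_plus, psum_delta, psum_scal, psum_minus, psum_scal by auto.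
      unfold inv_sq_diff_psum; ring. }
  rewrite psum_plus, psum_scal, psum_minus, (psum_swap (fun j k => b k * inv_sq_diff j k)).
  rewrite (psum_ext (fun k => psum (fun j => b k * inv_sq_diff j k) N)
             (fun k => -1 * (b k * inv_sq_diff_psum k N))), psum_scal; [ring|].
  intros k _; unfold inv_sq_diff_psum; rewrite <- psum_scal, <- psum_scal.
  apply psum_ext; intros j _; rewrite (inv_sq_diff_anti j k); ring.
Qed.

Lemma inv_mul_sq_le J m L : 1 <= J -> 1 <= m -> J + m = L ->
  / (J^2 * m) <= 2 / (L * J^2) + 4 / L^2.
Proof.
  intros HJ Hm HL.
  assert (0 < 2 / (L * J^2)) by (apply Rdiv_lt_0_compat; nra).
  assert (0 < 4 / L^2) by (apply Rdiv_lt_0_compat; nra).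
  destruct (Rle_lt_dec (L / 2) m).
  - assert (/ (J^2 * m) <= 2 / (L * J^2)); [|lra].
    apply Rle_trans with (/ (J^2 * (L / 2))); [apply Rinv_le_contravar; nra | right; field; nra].
  - assert (/ (J^2 * m) <= 4 / L^2); [|lra].
    apply Rle_trans with (/ J^2); [apply Rinv_le_contravar; nra|].
    apply Rle_trans with (/ (L / 2)^2); [apply Rinv_le_contravar; nra | right; field; nra].
Qed.

Lemma inv_sq_diff_err_lim y :
  is_lim_seq (fun N => psum (fun j => inv_sq_shift y j * inv_sq_diff_err j N) N) 0.
Proof.
  apply (is_lim_seq_le_le (fun _ => 0) _ (fun N => (2 * zeta2 + 4) / (INR N + 1)));
    [|apply is_lim_seq_const | apply is_lim_seq_div_INRp1].
  intros N; pose proof (pos_INR N); split.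
  - apply psum_nonneg; intros j Hj; destruct (inv_sq_diff_err_bounds j N Hj).
    destruct (inv_sq_shift_le y j); apply Rmult_le_pos; lra.
  - apply Rle_trans with (psum (fun j => 2 / (INR N + 1) * / (INR j + 1)^2 + 4 / (INR N + 1)^2) N).
    + apply psum_le; intros j Hj.
      destruct (inv_sq_diff_err_bounds j N Hj); destruct (inv_sq_shift_le y j).
      pose proof (pos_INR j).
      apply Rle_trans with (/ (INR j + 1)^2 * / INR (N - j)); [apply Rmult_le_compat; lra|].
      rewrite <- Rinv_mult.
      eapply Rle_trans; [apply (inv_mul_sq_le (INR j + 1) (INR (N - j)) (INR N + 1))|].
      * lra.
      * replace 1 with (INR 1) by reflexivity; apply le_INR; lia.
      * rewrite minus_INR by lia; ring.
      * right; field; lra.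
    + assert (psum (fun j => / (INR j + 1)^2) N <= zeta2).
      { apply psum_le_sums; [|apply sums_zeta2].
        intros k; pose proof (INRp1_pos k); apply Rlt_le, Rinv_0_lt_compat; nra. }
      rewrite psum_plus, psum_scal, psum_const.
      replace ((2 * zeta2 + 4) / (INR N + 1))
        with (2 / (INR N + 1) * zeta2 + (INR N + 1) * (4 / (INR N + 1)^2)) by (field; lra).
      apply Rplus_le_compat.
      * apply Rmult_le_compat_l; auto; apply Rlt_le, Rdiv_lt_0_compat; lra.
      * apply Rmult_le_compat_r; [apply Rlt_le, Rdiv_lt_0_compat; nra | lra].
Qed.

Definition coth_sq_sum y := Series (fun j => coth_term y j ^ 2).
Definition coth_cross_sum y := Series (fun j => inv_sq_shift y j * (3 / (4 * (INR j + 1)^2))).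

Lemma sums_coth_sq_sum y : sums (fun j => coth_term y j ^ 2) (coth_sq_sum y).
Proof.
  apply (sums_Series_of_dominated _ (4 * y^2)); intros k.
  rewrite Rabs_right by (apply Rle_ge, pow2_ge_0).
  rewrite coth_term_inv_sq_shift; destruct (inv_sq_shift_le y k) as [H0 H1].
  assert (/ (INR k + 1)^2 <= 1).
  { rewrite <- Rinv_1; pose proof (pos_INR k); apply Rinv_le_contravar; nra. }
  assert (inv_sq_shift y k ^ 2 <= / (INR k + 1)^2) by nra.
  pose proof (pow2_ge_0 y).
  replace ((2 * y * inv_sq_shift y k)^2) with (4 * y^2 * inv_sq_shift y k ^ 2) by ring.
  apply Rmult_le_compat_l; lra.
Qed.

Lemma sums_coth_cross_sum y :
  sums (fun j => inv_sq_shift y j * (3 / (4 * (INR j + 1)^2))) (coth_cross_sum y).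
Proof.
  apply (sums_Series_of_dominated _ 1); intros k.
  destruct (inv_sq_shift_le y k); pose proof (INRp1_pos k); pose proof (pos_INR k).
  assert (0 < 3 / (4 * (INR k + 1)^2) <= 1).
  { split; [apply Rdiv_lt_0_compat; nra|].
    apply Rle_trans with (3 / 4); [|lra].
    apply Rmult_le_compat_l; [lra | apply Rinv_le_contravar; nra]. }
  rewrite Rabs_right; nra.
Qed.

Lemma coth_sum_sq y : (coth_sum y)^2 = coth_sq_sum y + 8 * y^2 * coth_cross_sum y.
Proof.
  assert (H1 : is_lim_seq (fun N => (psum (coth_term y) N)^2) ((coth_sum y)^2)).
  { replace ((coth_sum y)^2) with (coth_sum y * coth_sum y) by ring.
    eapply is_lim_seq_ext; [|exact (is_lim_seq_mult' _ _ _ _ (sums_coth_sum y) (sums_coth_sum y))].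
    intros; simpl; ring. }
  assert (H2 : is_lim_seq (fun N => (psum (coth_term y) N)^2)
                 (coth_sq_sum y + 8 * y^2 * (coth_cross_sum y - 0))).
  { eapply is_lim_seq_ext; [intros N; symmetry; apply psum_coth_term_sq|].
    apply is_lim_seq_plus'; [apply sums_coth_sq_sum|].
    apply (is_lim_seq_scal_l _ (8 * y^2) (coth_cross_sum y - 0)).
    eapply is_lim_seq_ext;
      [|exact (is_lim_seq_minus' _ _ _ _ (sums_coth_cross_sum y) (inv_sq_diff_err_lim y))].
    intros N; cbv beta; rewrite <- psum_minus; apply psum_ext; intros j Hj.
    rewrite (inv_sq_diff_psum_eq j N Hj); ring. }
  apply is_lim_seq_unique in H1, H2; rewrite H1 in H2; injection H2 as E.
  simpl; rewrite E; ring.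
Qed.

(* Together with [coth_sum_sq] the terms add up to [6 / (k + 1)^2]. *)
Lemma coth_sum_riccati y : y <> 0 ->
  coth_sum_deriv y + 2 * coth_sum y / y + (coth_sum y)^2 = 6 * zeta2.
Proof.
  intros Hy; rewrite coth_sum_sq.
  replace (2 * coth_sum y / y) with (2 / y * coth_sum y) by (field; auto).
  apply (sums_unique (fun j => 6 * / (INR j + 1)^2)); [|apply sums_scal_zeta2].
  eapply sums_ext; [|exact (sums_plus _ _ _ _
    (sums_plus _ _ _ _ (sums_coth_sum_deriv y) (sums_scal (2 / y) _ _ (sums_coth_sum y)))
    (sums_plus _ _ _ _ (sums_coth_sq_sum y) (sums_scal (8 * y^2) _ _ (sums_coth_cross_sum y))))].
  intros j; cbv beta; unfold coth_term_deriv, coth_term, inv_sq_shift.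
  pose proof (sq_add_sqS_pos y j); pose proof (INRp1_pos j); field; split; lra.
Qed.

(** * Identification with the hyperbolic cotangent *)

Definition scaled_coth (c y : R) := c * (exp (2 * c * y) + 1) / (exp (2 * c * y) - 1).

Lemma scaled_coth_pos c y : 0 < c -> 0 < y -> 0 < scaled_coth c y.
Proof.
  intros Hc Hy; assert (1 < exp (2 * c * y)) by (apply exp_gt_1; nra).
  apply Rdiv_lt_0_compat; nra.
Qed.

Lemma scaled_coth_derivable c y : 0 < c -> 0 < y ->
  derivable_pt_lim (scaled_coth c) y (c * c - scaled_coth c y ^ 2).
Proof.
  intros Hc Hy; apply is_derive_Reals; unfold scaled_coth.
  assert (1 < exp (2 * c * y)) by (apply exp_gt_1; nra).
  auto_derive; [lra | field; lra].
Qed.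

(* [t coth t] lies in [[1, 1 + t]]. *)
Lemma mul_scaled_coth_sub_1 c y : 0 < c -> 0 < y -> Rabs (y * scaled_coth c y - 1) <= c * y.
Proof.
  intros Hc Hy; set (t := c * y); assert (Ht : 0 < t) by (unfold t; nra).
  replace (y * scaled_coth c y) with (t * (exp (2 * t) + 1) / (exp (2 * t) - 1)).
  2:{ unfold scaled_coth, t; replace (2 * (c * y)) with (2 * c * y) by ring.
      assert (1 < exp (2 * c * y)) by (apply exp_gt_1; nra); field; lra. }
  assert (HE : 1 < exp (2 * t)) by (apply exp_gt_1; lra).
  pose proof (exp_ineq1_le (2 * t)); pose proof (exp_ineq1_le (- (2 * t))).
  assert (exp (2 * t) * exp (- (2 * t)) = 1) by (rewrite <- exp_plus, Rplus_opp_r; apply exp_0).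
  apply Rabs_le; split;
    (apply Rplus_le_reg_r with 1; apply Rmult_le_reg_r with (exp (2 * t) - 1); [lra|];
     unfold Rdiv, Rminus; rewrite Rplus_assoc, Rplus_opp_l, Rplus_0_r;
     rewrite Rmult_assoc, Rinv_l by lra; nra).
Qed.

(* A solution of [g' = c^2 - g^2] on [(0, +oo)] with a pole like [1 / y] at [0] is
   [c coth (c y)]: the quantity [(y (g - c coth (c y)))^2] is nonincreasing and tends to [0]
   at [0]. *)
Section RiccatiUniqueness.

Variables (c K : R) (g : R -> R).
Hypothesis c_pos : 0 < c.
Hypothesis g_derivable : forall y, 0 < y -> derivable_pt_lim g y (c * c - g y ^ 2).
Hypothesis g_pole : forall y, 0 < y -> 1 <= y * g y.
Hypothesis g_pole_approx : forall y, 0 < y <= 1 -> Rabs (y * g y - 1) <= K * y.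

Let gap z := z * (g z - scaled_coth c z).

Lemma riccati_gap_derivable z : 0 < z ->
  derivable_pt_lim (fun z => gap z ^ 2) z
    (2 * z * (g z - scaled_coth c z) ^ 2 * (1 - z * (g z + scaled_coth c z))).
Proof.
  intros Hz; unfold gap.
  assert (H : derivable_pt_lim (fun z => z * (g z - scaled_coth c z)) z
     (1 * (g z - scaled_coth c z) + z * ((c * c - g z ^ 2) - (c * c - scaled_coth c z ^ 2)))).
  { apply (derivable_pt_lim_mult id (fun z => g z - scaled_coth c z)); [apply derivable_pt_lim_id|].
    apply derivable_pt_lim_minus; auto using scaled_coth_derivable. }
  apply is_derive_Reals in H; apply is_derive_Reals.
  replace (2 * z * _ * _) with
    (INR 2 * (1 * (g z - scaled_coth c z) + z * ((c * c - g z ^ 2) - (c * c - scaled_coth c z ^ 2)))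
     * (z * (g z - scaled_coth c z)) ^ Init.Nat.pred 2) by (simpl; ring).
  exact (is_derive_pow _ 2 z _ H).
Qed.

Lemma riccati_gap_decr s y : 0 < s -> s < y -> gap y ^ 2 <= gap s ^ 2.
Proof.
  intros Hs Hsy.
  destruct (MVT_cor2 (fun z => gap z ^ 2)
             (fun z => 2 * z * (g z - scaled_coth c z) ^ 2 * (1 - z * (g z + scaled_coth c z))) s y Hsy)
    as [w [Hw1 Hw2]]; [intros w Hw; apply riccati_gap_derivable; lra|].
  pose proof (g_pole w ltac:(lra)).
  assert (0 < w * scaled_coth c w) by (apply Rmult_lt_0_compat; [lra | apply scaled_coth_pos; lra]).
  assert (0 <= 2 * w * (g w - scaled_coth c w) ^ 2)
    by (pose proof (pow2_ge_0 (g w - scaled_coth c w)); nra).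
  assert (2 * w * (g w - scaled_coth c w) ^ 2 * (1 - w * (g w + scaled_coth c w)) * (y - s) <= 0);
    [|lra].
  rewrite <- (Rmult_0_l (y - s)); apply Rmult_le_compat_r; [lra | nra].
Qed.

Lemma riccati_gap_small s : 0 < s <= 1 -> Rabs (gap s) <= (K + c) * s.
Proof.
  intros Hs; unfold gap.
  pose proof (g_pole_approx s Hs); pose proof (mul_scaled_coth_sub_1 c s c_pos (proj1 Hs)).
  pose proof (Rabs_triang (s * g s - 1) (- (s * scaled_coth c s - 1))) as Ht; rewrite Rabs_Ropp in Ht.
  replace (s * (g s - scaled_coth c s)) with ((s * g s - 1) + - (s * scaled_coth c s - 1)) by ring.
  lra.
Qed.

Lemma riccati_unique y : 0 < y -> g y = scaled_coth c y.
Proof.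
  intros Hy; set (m := Rmin (y / 2) 1).
  assert (Hm : 0 < m) by (apply Rmin_pos; lra).
  assert (m <= 1) by apply Rmin_r; assert (m <= y / 2) by apply Rmin_l.
  assert (HK : 0 <= K)
    by (pose proof (g_pole_approx 1 ltac:(lra)); pose proof (Rabs_pos (1 * g 1 - 1)); lra).
  assert (HD : gap y ^ 2 <= 0).
  { apply (le_of_le_sub_div _ _ (((K + c) * m)^2)); [apply pow2_ge_0|]; intros n.
    set (s := m / (INR n + 1)); pose proof (INRp1_pos n); pose proof (pos_INR n).
    assert (Hs : 0 < s) by (apply Rdiv_lt_0_compat; lra).
    assert (Hsm : s <= m).
    { apply Rmult_le_reg_r with (INR n + 1); [lra|].
      unfold s, Rdiv; rewrite Rmult_assoc, Rinv_l by lra; nra. }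
    pose proof (riccati_gap_decr s y Hs ltac:(lra)).
    assert (gap s ^ 2 <= ((K + c) * s) ^ 2).
    { rewrite <- pow2_abs; apply pow_incr; split; [apply Rabs_pos | apply riccati_gap_small; lra]. }
    assert (((K + c) * s)^2 <= ((K + c) * m)^2 / (INR n + 1)).
    { replace (((K + c) * s)^2) with (((K + c) * m)^2 / (INR n + 1) * / (INR n + 1))
        by (unfold s; field; lra).
      rewrite <- (Rmult_1_r (((K + c) * m)^2 / (INR n + 1))) at 2.
      apply Rmult_le_compat_l; [apply Rdiv_le_0_compat; [apply pow2_ge_0 | lra]|].
      rewrite <- Rinv_1; apply Rinv_le_contravar; lra. }
    lra. }
  assert (Hgap : gap y = 0) by (pose proof (pow2_ge_0 (gap y)); nra).
  unfold gap in Hgap; apply Rmult_integral in Hgap; lra.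
Qed.

End RiccatiUniqueness.

Definition coth_series y := / y + coth_sum y.

Definition riccati_root := sqrt (6 * zeta2).

Lemma riccati_root_pos : 0 < riccati_root.
Proof. apply sqrt_lt_R0; pose proof zeta2_pos; lra. Qed.

Lemma riccati_root_sq : riccati_root * riccati_root = 6 * zeta2.
Proof. apply sqrt_sqrt; pose proof zeta2_pos; lra. Qed.

Lemma coth_series_derivable y : 0 < y ->
  derivable_pt_lim coth_series y (riccati_root * riccati_root - coth_series y ^ 2).
Proof.
  intros Hy; unfold coth_series.
  replace (riccati_root * riccati_root - (/ y + coth_sum y)^2) with (- / y^2 + coth_sum_deriv y).
  2:{ rewrite riccati_root_sq, <- (coth_sum_riccati y) by lra; field; lra. }
  apply (derivable_pt_lim_plus (fun z => / z) coth_sum); [|apply coth_sum_derivable].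
  apply is_derive_Reals; auto_derive; [lra | field; lra].
Qed.

Lemma coth_series_eq y : 0 < y -> coth_series y = scaled_coth riccati_root y.
Proof.
  apply (riccati_unique riccati_root (2 * zeta2)); auto using riccati_root_pos, coth_series_derivable.
  - intros z Hz; pose proof (coth_sum_nonneg z (Rlt_le _ _ Hz)).
    unfold coth_series; rewrite Rmult_plus_distr_l, Rinv_r by lra; nra.
  - intros z Hz; pose proof (coth_sum_nonneg z (Rlt_le _ _ (proj1 Hz))).
    pose proof (coth_sum_le z (Rlt_le _ _ (proj1 Hz))); pose proof zeta2_pos.
    unfold coth_series; rewrite Rmult_plus_distr_l, Rinv_r by lra.
    rewrite Rabs_right by nra; nra.
Qed.

(* Compare the behaviour of both sides as [y -> +oo], using [coth_sum_bounds]. *)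
Lemma riccati_root_eq_PI : riccati_root = PI.
Proof.
  assert (Hb : forall y, 0 < y -> Rabs (PI - riccati_root) <= 3 / y).
  { intros y Hy; pose proof (coth_series_eq y Hy) as E; pose proof (coth_sum_bounds y Hy).
    pose proof riccati_root_pos; unfold coth_series, scaled_coth in E.
    assert (HE : 1 < exp (2 * riccati_root * y)) by (apply exp_gt_1; nra).
    pose proof (exp_ineq1_le (2 * riccati_root * y)).
    set (r := 2 * riccati_root / (exp (2 * riccati_root * y) - 1)).
    assert (riccati_root * (exp (2 * riccati_root * y) + 1) / (exp (2 * riccati_root * y) - 1)
            = riccati_root + r) by (unfold r; field; lra).
    assert (0 <= r) by (apply Rdiv_le_0_compat; lra).
    assert (r <= / y).
    { apply Rle_trans with (2 * riccati_root / (2 * riccati_root * y)); [|right; field; lra].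
      apply Rmult_le_compat_l; [lra | apply Rinv_le_contravar; nra]. }
    unfold Rdiv in *; apply Rabs_le; split; lra. }
  assert (Rabs (PI - riccati_root) <= 0).
  { apply (le_of_le_sub_div _ _ 3); [lra|]; intros n.
    pose proof (Hb (INR n + 1) (INRp1_pos n)); pose proof (Rabs_pos (PI - riccati_root)); lra. }
  pose proof (Rabs_pos (PI - riccati_root)).
  assert (Rabs (PI - riccati_root) = 0) as E0 by lra; apply Rabs_eq_0 in E0; lra.
Qed.

Theorem coth_partial_fraction y : 0 < y ->
  / y + coth_sum y = PI * (exp (2 * PI * y) + 1) / (exp (2 * PI * y) - 1).
Proof. intros Hy; rewrite <- riccati_root_eq_PI; exact (coth_series_eq y Hy). Qed.

Theorem zeta2_eq : zeta2 = PI ^ 2 / 6.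
Proof. rewrite <- riccati_root_eq_PI; simpl; rewrite Rmult_1_r, riccati_root_sq; field. Qed.

(** * The Lambert-type series [sum 1 / (n (e^(n a) - 1))] *)

Definition lambert_term (a : R) (k : nat) := / ((INR k + 1) * (exp ((INR k + 1) * a) - 1)).
Definition lambert (a : R) := Series (lambert_term a).

Lemma lambert_term_pos a k : 0 < a -> 0 < lambert_term a k.
Proof.
  intros Ha; unfold lambert_term; pose proof (INRp1_pos k).
  assert (1 < exp ((INR k + 1) * a)) by (apply exp_gt_1; nra).
  apply Rinv_0_lt_compat; nra.
Qed.

Lemma sums_lambert a : 0 < a -> sums (lambert_term a) (lambert a).
Proof.
  intros Ha; apply (sums_Series_of_dominated _ (/ a)); intros k.
  rewrite Rabs_right by (apply Rle_ge, Rlt_le, lambert_term_pos; auto).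
  unfold lambert_term; pose proof (INRp1_pos k); pose proof (exp_ineq1_le ((INR k + 1) * a)).
  rewrite <- Rinv_mult; apply Rinv_le_contravar; [apply Rmult_lt_0_compat; nra|].
  apply Rle_trans with ((INR k + 1) * ((INR k + 1) * a)); [nra | apply Rmult_le_compat_l; lra].
Qed.

Lemma lambert_decr a b : 0 < a -> a <= b -> lambert b <= lambert a.
Proof.
  intros Ha Hab; apply (sums_le (lambert_term b) (lambert_term a)); auto using sums_lambert with real.
  - intros k; unfold lambert_term; pose proof (INRp1_pos k).
    assert (1 < exp ((INR k + 1) * a)) by (apply exp_gt_1; nra).
    assert (exp ((INR k + 1) * a) <= exp ((INR k + 1) * b)).
    { destruct (Req_dec a b) as [->|]; [lra|].
      left; apply exp_increasing, Rmult_lt_compat_l; lra. }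
    apply Rinv_le_contravar; [nra | apply Rmult_le_compat_l; lra].
  - apply sums_lambert; lra.
Qed.

Definition inv_sq_tail a m := coth_sum a / (2 * a) - psum (inv_sq_shift a) m.

Lemma inv_sq_tail_bounds a m : 0 < a -> (1 <= m)%nat ->
  atan (a / INR m) / a - / INR m ^ 2 <= inv_sq_tail a m <= atan (a / INR m) / a.
Proof.
  intros Ha Hm; assert (HmR : 0 < INR m) by (apply lt_0_INR; lia).
  destruct (inv_sq_shift_tail_bounds a m _ Ha (sums_shift _ _ m (sums_inv_sq_shift a Ha))) as [H1 H2].
  rewrite <- atan_inv, Rinv_div in H1, H2 by (apply Rdiv_lt_0_compat; lra).
  split; [|exact H2].
  assert (Hle : a / (INR m + 1) <= a / INR m).
  { apply Rmult_le_compat_l; [lra | apply Rinv_le_contravar; lra]. }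
  pose proof (atan_sub_le _ _ (Rlt_le _ _ (Rdiv_lt_0_compat a (INR m + 1) Ha ltac:(lra))) Hle).
  pose proof (inv_sub_inv_S_bounds m Hm).
  assert ((atan (a / INR m) - atan (a / (INR m + 1))) / a <= / INR m - / (INR m + 1)).
  { replace (/ INR m - / (INR m + 1)) with ((a / INR m - a / (INR m + 1)) / a) by (field; lra).
    apply Rmult_le_compat_r; [apply Rlt_le, Rinv_0_lt_compat|]; lra. }
  unfold inv_sq_tail in *; unfold Rdiv in *; lra.
Qed.

Definition lattice_term x n k := / ((INR n + 1)^2 * x^2 + (INR k + 1)^2).

(* Each term is expanded with the partial fraction series of [coth], cut at index [M]. *)
Lemma lambert_term_expand x n M : 0 < x ->
  lambert_term (2 * PI * x) n = / (2 * PI * (INR n + 1)^2 * x) - / (2 * (INR n + 1))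
    + x / PI * (psum (lattice_term x n) M + inv_sq_tail ((INR n + 1) * x) M).
Proof.
  intros Hx; set (y := (INR n + 1) * x); pose proof (INRp1_pos n); pose proof PI_RGT_0.
  assert (Hy : 0 < y) by (unfold y; nra).
  rewrite (psum_ext (lattice_term x n) (inv_sq_shift y))
    by (intros k _; unfold lattice_term, inv_sq_shift, y; f_equal; ring).
  unfold inv_sq_tail; rewrite Rplus_minus.
  replace (coth_sum y) with (PI * (exp (2 * PI * y) + 1) / (exp (2 * PI * y) - 1) - / y)
    by (rewrite <- coth_partial_fraction by auto; ring).
  unfold lambert_term; replace ((INR n + 1) * (2 * PI * x)) with (2 * PI * y) by (unfold y; ring).
  assert (1 < exp (2 * PI * y)) by (apply exp_gt_1; nra).
  unfold y in *; field; repeat split; nra.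
Qed.

Lemma lambert_term_expand_inv x m N : 0 < x ->
  lambert_term (2 * PI / x) m = x / (2 * PI * (INR m + 1)^2) - / (2 * (INR m + 1))
    + x / PI * (psum (fun k => lattice_term x k m) N + inv_sq_tail ((INR m + 1) / x) N / x^2).
Proof.
  intros Hx; set (y := (INR m + 1) / x); pose proof (INRp1_pos m); pose proof PI_RGT_0.
  assert (Hy : 0 < y) by (unfold y; apply Rdiv_lt_0_compat; lra).
  rewrite (psum_ext (fun k => lattice_term x k m) (fun k => / x^2 * inv_sq_shift y k)), psum_scal.
  2:{ intros k _; unfold lattice_term, inv_sq_shift, y; pose proof (INRp1_pos k).
      pose proof (pow2_ge_0 ((INR k + 1) * x)); pose proof (sq_add_sqS_pos ((INR m + 1) / x) k).
      field; repeat split; nra. }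
  unfold inv_sq_tail.
  replace (/ x^2 * psum (inv_sq_shift y) N + (coth_sum y / (2 * y) - psum (inv_sq_shift y) N) / x^2)
    with (coth_sum y / (2 * y) / x^2) by (field; lra).
  replace (coth_sum y) with (PI * (exp (2 * PI * y) + 1) / (exp (2 * PI * y) - 1) - / y)
    by (rewrite <- coth_partial_fraction by auto; ring).
  unfold lambert_term; replace ((INR m + 1) * (2 * PI / x)) with (2 * PI * y) by (unfold y; field; lra).
  assert (1 < exp (2 * PI * y)) by (apply exp_gt_1; nra).
  unfold y in *; field; repeat split; nra.
Qed.

Definition zeta2_psum N := psum (fun k => / (INR k + 1)^2) N.

(* The double sums of [lattice_term] coming from both expansions cancel. *)
Lemma lambert_psum_diff x N M : 0 < x ->
  psum (lambert_term (2 * PI * x)) N - psum (lambert_term (2 * PI / x)) M =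
  zeta2_psum N / (2 * PI * x) - x * zeta2_psum M / (2 * PI) + (harmonic M - harmonic N) / 2
  + x / PI * (psum (fun n => inv_sq_tail ((INR n + 1) * x) M) N
              - psum (fun m => inv_sq_tail ((INR m + 1) / x) N / x^2) M).
Proof.
  intros Hx; pose proof PI_RGT_0.
  rewrite (psum_ext _ _ N (fun n _ => lambert_term_expand x n M Hx)).
  rewrite (psum_ext _ _ M (fun m _ => lambert_term_expand_inv x m N Hx)).
  rewrite !psum_plus, !psum_minus, !psum_scal, !psum_plus, (psum_swap (lattice_term x)).
  unfold zeta2_psum, harmonic.
  rewrite
    (psum_ext (fun n => / (2 * PI * (INR n + 1)^2 * x)) (fun k => / (2 * PI * x) * / (INR k + 1)^2)),
    (psum_ext (fun m => x / (2 * PI * (INR m + 1)^2)) (fun k => x / (2 * PI) * / (INR k + 1)^2)),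
    (psum_ext (fun n => / (2 * (INR n + 1))) (fun i => / 2 * / (INR i + 1)) N),
    (psum_ext (fun n => / (2 * (INR n + 1))) (fun i => / 2 * / (INR i + 1)) M), !psum_scal;
    try (intros k _; pose proof (INRp1_pos k); field; repeat split; lra).
  field; lra.
Qed.

(** * Harmonic numbers and Riemann sums *)

Lemma ln_S_inv_bounds t : 0 < t -> ln (t + 2) - ln (t + 1) <= / (t + 1) <= ln (t + 1) - ln t.
Proof.
  intros Ht; assert (0 < / (t + 1)) by (apply Rinv_0_lt_compat; lra); split.
  - rewrite <- ln_div by lra; replace ((t + 2) / (t + 1)) with (1 + / (t + 1)) by (field; lra).
    apply ln_1p_le; lra.
  - assert (Hle : ln (t / (t + 1)) <= - / (t + 1)).
    { replace (t / (t + 1)) with (1 + - / (t + 1)) by (field; lra); apply ln_1p_le.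
      replace (1 + - / (t + 1)) with (t / (t + 1)) by (field; lra); apply Rdiv_lt_0_compat; lra. }
    rewrite ln_div in Hle by lra; lra.
Qed.

Lemma harmonic_ln_bounds b d : (1 <= b)%nat ->
  ln (INR (b + d) + 1) - ln (INR b + 1) <= harmonic (b + d) - harmonic b
  <= ln (INR (b + d)) - ln (INR b).
Proof.
  intros Hb; induction d as [|d IH]; [rewrite Nat.add_0_r; lra|].
  rewrite Nat.add_succ_r; unfold harmonic in *; rewrite psum_S, S_INR.
  assert (Hpos : 0 < INR (b + d)) by (apply lt_0_INR; lia).
  pose proof (ln_S_inv_bounds _ Hpos).
  replace (INR (b + d) + 1 + 1) with (INR (b + d) + 2) by ring; lra.
Qed.

Lemma harmonic_ln_approx a b : (1 <= a)%nat -> (1 <= b)%nat ->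
  Rabs (harmonic a - harmonic b - ln (INR a / INR b)) <= / INR a + / INR b.
Proof.
  assert (Hle : forall a b, (1 <= b)%nat -> (b <= a)%nat ->
            Rabs (harmonic a - harmonic b - ln (INR a / INR b)) <= / INR b).
  { intros a' b' Hb Hab; replace a' with (b' + (a' - b'))%nat by lia; set (d := (a' - b')%nat).
    pose proof (harmonic_ln_bounds b' d Hb).
    assert (Hb' : 0 < INR b') by (apply lt_0_INR; lia).
    assert (INR b' <= INR (b' + d)) by (apply le_INR; lia).
    assert (ln (INR (b' + d)) <= ln (INR (b' + d) + 1)) by (apply ln_le; lra).
    assert (ln (INR b' + 1) - ln (INR b') <= / INR b').
    { rewrite <- ln_div by lra; replace ((INR b' + 1) / INR b') with (1 + / INR b') by (field; lra).
      apply ln_1p_le; pose proof (Rinv_0_lt_compat _ Hb'); lra. }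
    rewrite ln_div by lra; apply Rabs_le; split; lra. }
  intros Ha Hb; pose proof (Rinv_0_lt_compat _ (lt_0_INR a ltac:(lia))).
  pose proof (Rinv_0_lt_compat _ (lt_0_INR b ltac:(lia))).
  destruct (Nat.le_ge_cases b a) as [Hba|Hab].
  - pose proof (Hle a b Hb Hba); lra.
  - pose proof (Hle b a Ha Hab) as Hrev.
    rewrite ln_div, <- Rabs_Ropp in Hrev by (apply lt_0_INR; lia).
    rewrite ln_div by (apply lt_0_INR; lia).
    replace (- (harmonic b - harmonic a - (ln (INR b) - ln (INR a))))
      with (harmonic a - harmonic b - (ln (INR a) - ln (INR b))) in Hrev by ring; lra.
Qed.

Definition riemann_sum (f : R -> R) (m : nat) := psum (fun n => f ((INR n + 1) / INR m)) m / INR m.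

Section RiemannSum.

Variable f : R -> R.
Hypothesis f_nonincr : forall u v, 0 < u -> u <= v -> f v <= f u.
Hypothesis f_bounds : forall u, 0 < u -> 0 <= f u <= 1.

(* Each cell of the coarse subdivision contains [l] cells of the fine one. *)
Lemma riemann_sum_mul m l : (1 <= m)%nat -> (1 <= l)%nat ->
  riemann_sum f m <= riemann_sum f (m * l) <= riemann_sum f m + / INR m.
Proof.
  intros Hm Hl; unfold riemann_sum.
  assert (HmR : 0 < INR m) by (apply lt_0_INR; lia).
  assert (HlR : 0 < INR l) by (apply lt_0_INR; lia).
  rewrite psum_block, mult_INR.
  set (g := fun i => f ((INR i + 1) / INR m)).
  set (F := fun i => psum (fun r => f ((INR (i * l + r) + 1) / (INR m * INR l))) l).
  assert (Hcmp : forall u v, 0 < u -> u <= v * INR l -> u / (INR m * INR l) <= v / INR m).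
  { intros u v Hu Huv; replace (v / INR m) with (v * INR l / (INR m * INR l)) by (field; lra).
    apply Rmult_le_compat_r; [apply Rlt_le, Rinv_0_lt_compat; nra | lra]. }
  assert (Hpos : forall n, 0 < (INR n + 1) / (INR m * INR l))
    by (intros n; apply Rdiv_lt_0_compat; [apply INRp1_pos | nra]).
  assert (Hlow : forall i, INR l * g i <= F i).
  { intros i; unfold F; rewrite <- (psum_const (g i) l); apply psum_le; intros r Hr.
    apply f_nonincr; [apply Hpos|]; apply Hcmp; [apply INRp1_pos|].
    rewrite <- S_INR, <- (S_INR i), <- mult_INR; apply le_INR; nia. }
  assert (Hup : forall i, F (S i) <= INR l * g i).
  { intros i; unfold F; rewrite <- (psum_const (g i) l); apply psum_le; intros r Hr.
    apply f_nonincr; [apply Rdiv_lt_0_compat; [apply INRp1_pos | lra]|].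
    apply Rmult_le_reg_r with (INR m * INR l); [nra|].
    replace ((INR i + 1) / INR m * (INR m * INR l)) with ((INR i + 1) * INR l) by (field; lra).
    replace (_ / (INR m * INR l) * (INR m * INR l)) with (INR (S i * l + r) + 1) by (field; lra).
    rewrite <- !S_INR, <- mult_INR; apply le_INR; nia. }
  assert (Hfirst : F O <= INR l).
  { apply Rle_trans with (psum (fun _ => 1) l); [|rewrite psum_const; lra].
    apply psum_le; intros r _; apply f_bounds, Hpos. }
  assert (Hg : forall i, 0 <= g i)
    by (intros i; apply f_bounds, Rdiv_lt_0_compat; [apply INRp1_pos | lra]).
  split.
  - replace (psum g m / INR m) with (psum (fun i => INR l * g i) m / (INR m * INR l))
      by (rewrite psum_scal; field; lra).
    apply Rmult_le_compat_r; [apply Rlt_le, Rinv_0_lt_compat; nra|].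
    apply psum_le; auto.
  - destruct m as [|m']; [lia|]; rewrite psum_first.
    assert (psum (fun i => F (S i)) m' <= INR l * psum g (S m')).
    { rewrite <- psum_scal.
      apply Rle_trans with (psum (fun i => INR l * g i) m'); [apply psum_le; auto|].
      rewrite psum_S; pose proof (Hg m'); nra. }
    apply Rle_trans with ((INR l + INR l * psum g (S m')) / (INR (S m') * INR l));
      [apply Rmult_le_compat_r; [apply Rlt_le, Rinv_0_lt_compat; nra | lra]|].
    right; field; lra.
Qed.

Lemma riemann_sum_close m n : (1 <= m)%nat -> (1 <= n)%nat ->
  Rabs (riemann_sum f m - riemann_sum f n) <= / INR m + / INR n.
Proof.
  intros Hm Hn.
  destruct (riemann_sum_mul m n Hm Hn); destruct (riemann_sum_mul n m Hn Hm).
  rewrite (Nat.mul_comm n m) in *.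
  pose proof (Rinv_0_lt_compat _ (lt_0_INR m ltac:(lia))).
  pose proof (Rinv_0_lt_compat _ (lt_0_INR n ltac:(lia))).
  apply Rabs_le; split; lra.
Qed.

End RiemannSum.

Definition atan_ratio t := atan t / t.

Lemma atan_ratio_nonincr u v : 0 < u -> u <= v -> atan_ratio v <= atan_ratio u.
Proof.
  intros Hu Huv; unfold atan_ratio.
  assert (u * atan v <= v * atan u).
  { destruct (atan_sub_bounds v u) as [_ H]; try lra.
    pose proof (atan_ge_div u (Rlt_le _ _ Hu)).
    assert (u * ((v - u) / (1 + u^2)) = (v - u) * (u / (1 + u^2))) by (field; nra).
    assert (u * (atan v - atan u) <= u * ((v - u) / (1 + u^2))) by (apply Rmult_le_compat_l; lra).
    assert ((v - u) * (u / (1 + u^2)) <= (v - u) * atan u) by (apply Rmult_le_compat_l; lra).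
    nra. }
  apply Rmult_le_reg_r with (u * v); [nra|].
  replace (atan v / v * (u * v)) with (u * atan v) by (field; lra).
  replace (atan u / u * (u * v)) with (v * atan u) by (field; lra); lra.
Qed.

Lemma atan_ratio_bounds t : 0 < t -> 0 <= atan_ratio t <= 1.
Proof.
  intros Ht; unfold atan_ratio; pose proof (atan_nonneg t (Rlt_le _ _ Ht)).
  pose proof (atan_le_id t (Rlt_le _ _ Ht)); split.
  - apply Rdiv_le_0_compat; lra.
  - apply Rmult_le_reg_r with t; [lra|]; unfold Rdiv; rewrite Rmult_assoc, Rinv_l; lra.
Qed.

Lemma atan_riemann_close m n : (1 <= m)%nat -> (1 <= n)%nat ->
  Rabs (riemann_sum atan_ratio m - riemann_sum atan_ratio n) <= / INR m + / INR n.
Proof. apply riemann_sum_close; [apply atan_ratio_nonincr | apply atan_ratio_bounds]. Qed.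

(* The tails of the inner sums of [lambert_psum_diff] are a Riemann sum of [atan t / t]. *)
Lemma psum_inv_sq_tail_riemann z N M : 0 < z -> (1 <= N)%nat -> (1 <= M)%nat -> z * INR N = INR M ->
  riemann_sum atan_ratio N - / INR M
  <= z * psum (fun n => inv_sq_tail ((INR n + 1) * z) M) N
  <= riemann_sum atan_ratio N.
Proof.
  intros Hz HN HM Hzn; assert (HNR : 0 < INR N) by (apply lt_0_INR; lia).
  assert (HMR : 0 < INR M) by (apply lt_0_INR; lia).
  assert (Ht : forall n, z * (atan ((INR n + 1) * z / INR M) / ((INR n + 1) * z))
                         = / INR N * atan_ratio ((INR n + 1) / INR N)).
  { intros n; pose proof (INRp1_pos n); unfold atan_ratio.
    replace ((INR n + 1) * z / INR M) with ((INR n + 1) / INR N) by (rewrite <- Hzn; field; lra).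
    field; repeat split; lra. }
  unfold riemann_sum; rewrite <- psum_scal.
  replace (psum (fun n => atan_ratio ((INR n + 1) / INR N)) N / INR N)
    with (psum (fun n => / INR N * atan_ratio ((INR n + 1) / INR N)) N)
    by (rewrite psum_scal; field; lra).
  replace (/ INR M) with (psum (fun _ => z / INR M ^ 2) N)
    by (rewrite psum_const, <- Hzn; field; lra).
  rewrite <- psum_minus; split; apply psum_le; intros n _; rewrite <- Ht;
    pose proof (INRp1_pos n); destruct (inv_sq_tail_bounds ((INR n + 1) * z) M); auto;
    nra.
Qed.

(** * The transformation formula *)

(* Truncating at [N] and [M] with [x N = M] makes the two Riemann sums and the two harmonic
   numbers comparable. *)
Lemma lambert_psum_approx x N M : 0 < x -> (1 <= N)%nat -> (1 <= M)%nat -> x * INR N = INR M ->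
  Rabs (psum (lambert_term (2 * PI * x)) N - psum (lambert_term (2 * PI / x)) M
        - (zeta2_psum N / (2 * PI * x) - x * zeta2_psum M / (2 * PI) + ln x / 2))
  <= 3 * (/ INR N + / INR M).
Proof.
  intros Hx HN HM HxNM; pose proof PI_RGT_0 as Hpi; pose proof PI2_1.
  assert (HNR : 0 < INR N) by (apply lt_0_INR; lia).
  assert (HMR : 0 < INR M) by (apply lt_0_INR; lia).
  assert (He : 0 < / INR N /\ 0 < / INR M) by (split; apply Rinv_0_lt_compat; lra).
  set (e := / INR N + / INR M).
  rewrite lambert_psum_diff by auto.
  set (S1 := psum (fun n => inv_sq_tail ((INR n + 1) * x) M) N).
  set (S2 := psum (fun m => inv_sq_tail ((INR m + 1) / x) N / x^2) M).
  assert (H1 := psum_inv_sq_tail_riemann x N M Hx HN HM HxNM); fold S1 in H1.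
  assert (H2 : riemann_sum atan_ratio M - / INR N <= x * S2 <= riemann_sum atan_ratio M).
  { replace (x * S2) with (/ x * psum (fun m => inv_sq_tail ((INR m + 1) * / x) N) M)
      by (unfold S2; rewrite <- !psum_scal; apply psum_ext; intros; unfold Rdiv; field; lra).
    apply psum_inv_sq_tail_riemann; auto with real.
    rewrite <- HxNM; field; lra. }
  assert (HR := atan_riemann_close N M HN HM); fold e in HR.
  assert (HH : Rabs (harmonic M - harmonic N - ln x) <= e).
  { replace x with (INR M / INR N) by (rewrite <- HxNM; field; lra).
    unfold e; rewrite Rplus_comm; apply harmonic_ln_approx; auto. }
  assert (HS : Rabs (x / PI * (S1 - S2)) <= 2 * e).
  { replace (x / PI * (S1 - S2)) with ((x * S1 - x * S2) * / PI) by (field; lra).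
    rewrite Rabs_mult, (Rabs_right (/ PI)) by (apply Rle_ge, Rlt_le, Rinv_0_lt_compat; lra).
    assert (/ PI < 1) by (rewrite <- Rinv_1; apply Rinv_lt_contravar; lra).
    assert (Rabs (x * S1 - x * S2) <= 2 * e)
      by (apply Rabs_le_between in HR; apply Rabs_le; unfold e in *; lra).
    pose proof (Rinv_0_lt_compat _ Hpi); pose proof (Rabs_pos (x * S1 - x * S2)); nra. }
  apply Rabs_le_between in HH; apply Rabs_le_between in HS; apply Rabs_le.
  unfold e in *; split; lra.
Qed.

Lemma is_lim_seq_mul_S k u (l : R) : (1 <= k)%nat -> is_lim_seq u l ->
  is_lim_seq (fun t => u (k * S t)%nat) l.
Proof.
  intros Hk H; apply (is_lim_seq_subseq u l (fun t => (k * S t)%nat)); auto.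
  intros P [N HN]; exists N; intros n Hn; apply HN; nia.
Qed.

Lemma inv_INR_mul_S_le k t : (1 <= k)%nat -> / INR (k * S t) <= / (INR t + 1).
Proof.
  intros Hk; rewrite <- S_INR; apply Rinv_le_contravar; [apply lt_0_INR; lia | apply le_INR; nia].
Qed.

Lemma lambert_transform_rat p q : (1 <= p)%nat -> (1 <= q)%nat ->
  let x := INR p / INR q in
  lambert (2 * PI * x) - lambert (2 * PI / x) = ln x / 2 + PI / (12 * x) - PI * x / 12.
Proof.
  intros Hp Hq x; pose proof PI_RGT_0.
  assert (Hx : 0 < x) by (apply Rdiv_lt_0_compat; apply lt_0_INR; lia).
  set (u := fun t =>
    psum (lambert_term (2 * PI * x)) (q * S t) - psum (lambert_term (2 * PI / x)) (p * S t)
        - (zeta2_psum (q * S t) / (2 * PI * x) - x * zeta2_psum (p * S t) / (2 * PI) + ln x / 2)).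
  assert (H0 : is_lim_seq u 0).
  { apply (is_lim_seq_le_le (fun t => - (6 / (INR t + 1))) u (fun t => 6 / (INR t + 1))).
    - intros t.
      pose proof (inv_INR_mul_S_le q t Hq); pose proof (inv_INR_mul_S_le p t Hp).
      replace (6 / (INR t + 1)) with (3 * (/ (INR t + 1) + / (INR t + 1)))
        by (pose proof (INRp1_pos t); field; lra).
      pose proof (lambert_psum_approx x (q * S t) (p * S t) Hx ltac:(nia) ltac:(nia)) as Happ.
      refine (_ (Happ _)); [intros Hab; apply Rabs_le_between in Hab; unfold u; lra|].
      rewrite !mult_INR; unfold x; field; apply not_0_INR; lia.
    - eapply is_lim_seq_ext; [|apply (is_lim_seq_div_INRp1 (-6))]; intros t; simpl; unfold Rdiv; ring.
    - apply is_lim_seq_div_INRp1. }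
  assert (H1 : is_lim_seq u (lambert (2 * PI * x) - lambert (2 * PI / x)
                 - (zeta2 / (2 * PI * x) - x * zeta2 / (2 * PI) + ln x / 2))).
  { assert (Hz : forall k c, (1 <= k)%nat ->
                 is_lim_seq (fun t => c * zeta2_psum (k * S t)) (c * zeta2)).
    { intros k c Hk; apply (is_lim_seq_scal_l _ c zeta2).
      apply (is_lim_seq_mul_S k zeta2_psum), sums_zeta2; auto. }
    apply is_lim_seq_minus'; [apply is_lim_seq_minus' | apply is_lim_seq_plus'];
      [| | apply is_lim_seq_minus' | apply is_lim_seq_const].
    - apply (is_lim_seq_mul_S q (psum _)), sums_lambert; auto; nra.
    - apply (is_lim_seq_mul_S p (psum _)), sums_lambert; auto; apply Rdiv_lt_0_compat; lra.
    - replace (zeta2 / (2 * PI * x)) with (/ (2 * PI * x) * zeta2) by (unfold Rdiv; ring).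
      eapply is_lim_seq_ext; [|exact (Hz q _ Hq)]; intros; simpl; unfold Rdiv; ring.
    - replace (x * zeta2 / (2 * PI)) with (x / (2 * PI) * zeta2) by (unfold Rdiv; ring).
      eapply is_lim_seq_ext; [|exact (Hz p _ Hp)]; intros; simpl; unfold Rdiv; ring. }
  apply is_lim_seq_unique in H0, H1; rewrite H0 in H1; injection H1 as E.
  rewrite zeta2_eq in E.
  replace (PI / (12 * x)) with (PI ^ 2 / 6 / (2 * PI * x)) by (field; lra).
  replace (PI * x / 12) with (x * (PI ^ 2 / 6) / (2 * PI)) by (field; lra); lra.
Qed.

Lemma rat_between x d : 0 < x -> 0 < d -> exists p q, (1 <= p)%nat /\ (1 <= q)%nat /\
  INR p / INR q <= x < (INR p + 1) / INR q /\ / INR q < d.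
Proof.
  intros Hx Hd; destruct (INR_unbounded (Rmax (/ d) (/ x))) as [q Hq].
  pose proof (Rmax_l (/ d) (/ x)); pose proof (Rmax_r (/ d) (/ x)).
  pose proof (Rinv_0_lt_compat _ Hd); pose proof (Rinv_0_lt_compat _ Hx).
  assert (HqR : 0 < INR q) by lra.
  assert (Hxq : 1 < x * INR q).
  { replace 1 with (x * / x) by (field; lra); apply Rmult_lt_compat_l; lra. }
  destruct (nfloor_ex (x * INR q)) as [p Hp]; [lra|].
  exists p, q; repeat split.
  - destruct p; [simpl in Hp; lra | lia].
  - destruct q; [simpl in HqR; lra | lia].
  - apply Rmult_le_reg_r with (INR q); [lra|]; unfold Rdiv; rewrite Rmult_assoc, Rinv_l; lra.
  - apply Rmult_lt_reg_r with (INR q); [lra|]; unfold Rdiv; rewrite Rmult_assoc, Rinv_l; lra.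
  - rewrite <- (Rinv_inv d); apply Rinv_lt_contravar; nra.
Qed.

Lemma eq_of_nonincr_continuous_rat (G F : R -> R) x : 0 < x ->
  (forall u v, 0 < u -> u <= v -> G v <= G u) -> continuity_pt F x ->
  (forall p q, (1 <= p)%nat -> (1 <= q)%nat -> G (INR p / INR q) = F (INR p / INR q)) ->
  G x = F x.
Proof.
  intros Hx HG HF Hrat.
  assert (Hnear : forall eps, 0 < eps -> exists d, 0 < d /\
            forall r, Rabs (r - x) < d -> Rabs (F r - F x) < eps).
  { intros eps He; destruct (HF eps He) as [d [Hd Hf]]; exists d; split; auto.
    intros r Hr; destruct (Req_dec r x) as [->|Hne]; [rewrite Rminus_diag, Rabs_R0; auto|].
    apply Hf; repeat split; auto. }
  apply Rle_antisym; apply Rle_plus_epsilon; intros eps He;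
    destruct (Hnear eps He) as [d [Hd Hf]];
    destruct (rat_between x d Hx Hd) as [p [q [Hp [Hq [[Hlo Hhi] Hqd]]]]];
    assert (HqR : 0 < INR q) by (apply lt_0_INR; lia);
    assert (Hstep : (INR p + 1) / INR q - INR p / INR q = / INR q) by (field; lra).
  - assert (Hr : 0 < INR p / INR q) by (apply Rdiv_lt_0_compat; [apply lt_0_INR; lia | lra]).
    pose proof (HG _ _ Hr Hlo); rewrite Hrat in * by auto.
    assert (Hclose : Rabs (F (INR p / INR q) - F x) < eps)
      by (apply Hf; rewrite Rabs_minus_sym, Rabs_right; lra).
    apply Rabs_lt_between in Hclose; lra.
  - assert (Hx' : x <= INR (S p) / INR q) by (rewrite S_INR; lra).
    pose proof (HG _ _ Hx Hx'); rewrite Hrat in * by lia.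
    assert (Hclose : Rabs (F (INR (S p) / INR q) - F x) < eps)
      by (apply Hf; rewrite S_INR, Rabs_right; lra).
    apply Rabs_lt_between in Hclose; lra.
Qed.

Lemma lambert_diff_nonincr x y : 0 < x -> x <= y ->
  lambert (2 * PI * y) - lambert (2 * PI / y) <= lambert (2 * PI * x) - lambert (2 * PI / x).
Proof.
  intros Hx Hxy; pose proof PI_RGT_0.
  assert (lambert (2 * PI * y) <= lambert (2 * PI * x)) by (apply lambert_decr; nra).
  assert (lambert (2 * PI / x) <= lambert (2 * PI / y)); [|lra].
  apply lambert_decr; [apply Rdiv_lt_0_compat; lra|].
  apply Rmult_le_compat_l; [lra | apply Rinv_le_contravar; lra].
Qed.

Theorem lambert_transform a b : 0 < a -> 0 < b -> a * b = 4 * PI ^ 2 ->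
  lambert a - lambert b = (ln a - ln (2 * PI)) / 2 + (b - a) / 24.
Proof.
  intros Ha Hb Hab; pose proof PI_RGT_0.
  set (x := a / (2 * PI)); assert (Hx : 0 < x) by (apply Rdiv_lt_0_compat; lra).
  replace a with (2 * PI * x) at 1 by (unfold x; field; lra).
  replace b with (2 * PI / x) at 1
    by (unfold x; apply Rmult_eq_reg_l with a; [field_simplify; lra | lra]).
  rewrite (eq_of_nonincr_continuous_rat (fun x => lambert (2 * PI * x) - lambert (2 * PI / x))
             (fun x => ln x / 2 + PI / (12 * x) - PI * x / 12) x Hx).
  - unfold x; rewrite ln_div by lra.
    replace (PI / (12 * (a / (2 * PI)))) with (b / 24)
      by (apply Rmult_eq_reg_l with a; [field_simplify; lra | lra]).
    field; lra.
  - exact lambert_diff_nonincr.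
  - apply derivable_continuous_pt; exists (/ (2 * x) - PI / (12 * x^2) - PI / 12).
    apply is_derive_Reals; auto_derive; [repeat split; lra | field; lra].
  - intros p q Hp Hq; exact (lambert_transform_rat p q Hp Hq).
Qed.

(** * The two series of the corollary *)

Lemma term1_eq a k : 0 < a -> term1 a (S k) = lambert_term a k - lambert_term (2 * a) k.
Proof.
  intros Ha; unfold term1, lambert_term; rewrite S_INR; pose proof (INRp1_pos k).
  set (n := INR k + 1) in *.
  replace (n * (2 * a)) with (2 * n * a) by ring.
  replace (exp (2 * n * a)) with (exp (n * a) * exp (n * a)) by (rewrite <- exp_plus; f_equal; ring).
  assert (1 < exp (n * a)) by (apply exp_gt_1; nra).
  field; repeat split; nra.
Qed.

Lemma sums_term1 a : 0 < a -> is_series (fun k => term1 a (S k)) (lambert a - lambert (2 * a)).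
Proof.
  intros Ha; apply sums_is_series.
  eapply sums_ext; [|apply sums_minus; apply sums_lambert; lra].
  intros k; symmetry; apply term1_eq; auto.
Qed.

(* Odd-indexed terms of the alternating series regroup into the series at [4 b]. *)
Lemma psum_term2 b n : 0 < b ->
  psum (fun k => term2 b (S k)) n
  = psum (lambert_term (4 * b)) (Nat.div2 n) - psum (lambert_term (2 * b)) n.
Proof.
  intros Hb.
  assert (Hu : forall k, term2 b (S k) = (-1) ^ S k * lambert_term (2 * b) k).
  { intros k; unfold term2, lambert_term; rewrite S_INR; unfold Rdiv; do 5 f_equal; ring. }
  assert (Hodd : forall j, lambert_term (2 * b) (S (2 * j)) = lambert_term (4 * b) j / 2).
  { intros j; unfold lambert_term; rewrite S_INR, mult_INR; pose proof (pos_INR j).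
    replace (INR 2) with 2 by (simpl; lra).
    replace ((2 * INR j + 1 + 1) * (2 * b)) with ((INR j + 1) * (4 * b)) by ring.
    assert (1 < exp ((INR j + 1) * (4 * b))) by (apply exp_gt_1; nra).
    field; split; lra. }
  assert (Hsign : forall j, (-1) ^ (2 * j) = 1)
    by (intros j; rewrite pow_mult; replace ((-1)^2) with 1 by ring; apply pow1).
  assert (Heven : forall K, psum (fun k => term2 b (S k)) (2 * K)
            = psum (lambert_term (4 * b)) K - psum (lambert_term (2 * b)) (2 * K)).
  { induction K as [|K IH]; [simpl; ring|].
    replace (2 * S K)%nat with (S (S (2 * K))) by lia.
    rewrite !psum_S, IH, !Hu, Hodd, <- !tech_pow_Rmult, Hsign; field. }
  destruct (Nat.Even_or_Odd n) as [[K ->]|[K ->]].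
  - rewrite Nat.div2_double; apply Heven.
  - replace (2 * K + 1)%nat with (S (2 * K)) by lia.
    rewrite Nat.div2_succ_double, !psum_S, Heven, Hu, <- tech_pow_Rmult, Hsign; ring.
Qed.

Lemma sums_term2 b : 0 < b -> is_series (fun k => term2 b (S k)) (lambert (4 * b) - lambert (2 * b)).
Proof.
  intros Hb; apply sums_is_series; unfold sums.
  eapply is_lim_seq_ext; [intros n; symmetry; apply psum_term2; auto|].
  apply is_lim_seq_minus'; [|apply sums_lambert; lra].
  apply (is_lim_seq_subseq (psum _) _ Nat.div2); [|apply sums_lambert; lra].
  intros P [N HN]; exists (2 * N)%nat; intros n Hn; apply HN.
  pose proof (Nat.div2_odd n); destruct (Nat.odd n); simpl in *; lia.
Qed.

Theorem corollary1p12 (a b : R) (ha : 0 < a) (hb : 0 < b) (hab : a * b = PI ^ 2) :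
  exists S1 S2 : R,
    is_series (fun k : nat => term1 a (S k)) S1 /\
    is_series (fun k : nat => term2 b (S k)) S2 /\
    S1 - S2 = - (1/2) * ln 2 + (a + 2 * b) / 24.
Proof.
  exists (lambert a - lambert (2 * a)), (lambert (4 * b) - lambert (2 * b)).
  split; [apply sums_term1; auto|]; split; [apply sums_term2; auto|].
  pose proof PI_RGT_0.
  assert (E1 : lambert a - lambert (4 * b) = (ln a - ln (2 * PI)) / 2 + (4 * b - a) / 24)
    by (apply lambert_transform; lra).
  assert (E2 : lambert (2 * a) - lambert (2 * b) = (ln (2 * a) - ln (2 * PI)) / 2 + (2 * b - 2 * a) / 24)
    by (apply lambert_transform; lra).
  rewrite ln_mult in E2 by lra; lra.
Qed.
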